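(* Let $F$ be a finite field, let $f,g,q\in F[\lambda]$ with $f,g$ relatively prime and $q=\sum_{i=0}^m q_i\lambda^i$ monic and irreducible of degree $m$, and let $Q(\lambda)=\mathfrak p_q(g,f):=\sum_{i=0}^m q_i\,f(\lambda)^i g(\lambda)^{m-i}$. Assume $Q\neq 0$. Let $L$ be the splitting field of $q$ over $F$ and $\alpha\in L$ a root of $q$. Then the number of distinct monic irreducible factors of $Q$ in $F[\lambda]$ equals the number of distinct monic irreducible factors of $f(\lambda)-\alpha g(\lambda)$ in $L[\lambda]$.
   Context: $\mathfrak p_q(g,f)=g^{\deg q}\,q(f/g)$ is the homogenization of $q$ evaluated at $(g,f)$. A polynomial $\mathfrak p_q(g,f)$ with $f,g$ coprime and $q$ monic irreducible is called a candidate. *)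

From HB Require Import structures.
From mathcomp Require Import all_boot all_order all_algebra all_field.
Set Implicit Arguments. Unset Strict Implicit. Unset Printing Implicit Defensive.
Import GRing.Theory.
Local Open Scope ring_scope.

Definition homogp (K : fieldType) (q g f : {poly K}) : {poly K} :=
  \sum_(i < size q) q`_i *: (f ^+ i * g ^+ ((size q).-1 - i)).

Definition num_monic_irr_factors (K : fieldType) (P : {poly K}) (n : nat) : Prop :=
  exists s : seq {poly K},
    [/\ uniq s,
        (forall p : {poly K},
            p \in s <-> [/\ p \is monic, irreducible_poly p & p %| P])
      & size s = n].

(* Over the splitting field, q = prod_(beta) ('X - beta) over the conjugates
   beta of alpha, hence Q = prod_(beta) (f - beta g), and coprimality of f and g
   makes these pencil members pairwise coprime.  Since F is finite, L = F(alpha)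
   and Gal(L/F) acts simply transitively on the conjugates.  Hence every monic
   irreducible factor P of Q has exactly one monic irreducible factor over L
   dividing f - alpha g (its other factors are Galois conjugates, living in the
   other pencil members), and P |-> that factor is a bijection. *)

From HB Require Import structures.
From mathcomp Require Import all_boot all_order all_algebra all_field.
From mathcomp Require Import zify.
From Stdlib Require Import Classical ClassicalEpsilon.
Import GRing.Theory.
Set Implicit Arguments. Unset Strict Implicit. Unset Printing Implicit Defensive.
Local Open Scope ring_scope.

Definition monic_irr_factor (K : fieldType) (D P : {poly K}) : Prop :=
  [/\ P \is monic, irreducible_poly P & P %| D].

Section IrreducibleFactors.

Variable K : fieldType.
Implicit Types a b d e h p D P : {poly K}.

Lemma irredp_eqp p p' : p %= p' -> irreducible_poly p -> irreducible_poly p'.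
Proof.
move=> pq [sz irr]; split=> [|d d1 dq]; first by rewrite -(eqp_size pq).
by apply: (eqp_trans _ pq); apply: irr; rewrite // (eqp_dvdr _ pq).
Qed.

Lemma irredp_dvdM h a b :
  irreducible_poly h -> h %| a * b -> (h %| a) || (h %| b).
Proof.
move=> hi; have [//|/= nha] := boolP (h %| a).
by rewrite Gauss_dvdpr // irreducible_poly_coprime.
Qed.

Lemma irredp_dvd_prod (I : eqType) (r : seq I) (F : I -> {poly K}) h :
  irreducible_poly h -> h %| \prod_(i <- r) F i -> exists2 i, i \in r & h %| F i.
Proof.
move=> hi; elim: r => [|i r IH].
  by rewrite big_nil dvdp1; case: hi => /gtn_eqF ->.
rewrite big_cons => /(irredp_dvdM hi)/orP[hFi|/IH[j jr hFj]].
  by exists i; rewrite ?mem_head.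
by exists j; rewrite // in_cons jr orbT.
Qed.

Lemma irredp_coprime_dvd h a b :
  irreducible_poly h -> coprimep a b -> h %| a -> ~~ (h %| b).
Proof.
by move=> hi cab ha; rewrite -irreducible_poly_coprime // (coprimep_dvdr ha).
Qed.

Lemma monic_irredp_dvd_eq h P :
  h \is monic -> P \is monic -> irreducible_poly h -> irreducible_poly P ->
  h %| P -> h = P.
Proof.
move=> mh mP ih iP /(irredp_XsubCP iP)[h_1|]; last by rewrite eqp_monic // => /eqP.
by case: ih; rewrite (eqp_size h_1) size_poly1.
Qed.

Lemma exists_irr_factor (Pr : {poly K} -> Prop) D :
  (forall d e, Pr (d * e) -> Pr d \/ Pr e) ->
  (forall d, d != 0 -> Pr d -> (1 < size d)%N) ->
  D != 0 -> Pr D -> exists P, [/\ irreducible_poly P, P %| D & Pr P].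
Proof.
move=> PrM Pr_size; have [n] := ubnP (size D).
elim: n D => // n IH D /ltnSE szD nzD PrD.
have [iD|niD] := classic (irreducible_poly D); first by exists D.
have [d [d1 dD ndD]] : exists d, [/\ size d != 1, d %| D & ~~ (d %= D)].
  apply: NNPP => nod; apply: niD; split=> [|d d1 dD]; first exact: Pr_size.
  by apply: NNPP => ndD; apply: nod; exists d; split=> //; apply/negP.
have nzd : d != 0 by apply: contraNneq nzD => d0; move: dD; rewrite d0 dvd0p.
set e := D %/ d.
have De : D = e * d by rewrite divpK.
have nze : e != 0 by apply: contraNneq nzD => e0; rewrite De e0 mul0r.
have ltd : (size d < size D)%N.
  by rewrite ltn_neqAle (dvdp_size_eqp dD) ndD dvdp_leq.
have lte : (size e < size D)%N.
  have d_gt1 : (1 < size d)%N by rewrite ltn_neqAle eq_sym d1 size_poly_gt0.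
  rewrite De size_mul //; case: (size d) d_gt1 => [|[|k]] // _.
  by rewrite !addnS ltnS leq_addr.
rewrite De in PrD; case: (PrM _ _ PrD) => [Pre|Prd].
  have [P [iP PDe PrP]] := IH _ (leq_trans lte szD) nze Pre.
  by exists P; split; rewrite // De dvdp_mulr.
have [P [iP Pd PrP]] := IH _ (leq_trans ltd szD) nzd Prd.
by exists P; split; rewrite // De dvdp_mull.
Qed.

Lemma exists_monic_irr_factor (Pr : {poly K} -> Prop) D :
  (forall d e, Pr (d * e) -> Pr d \/ Pr e) ->
  (forall d, d != 0 -> Pr d -> (1 < size d)%N) ->
  (forall c d, c != 0 -> Pr d -> Pr (c *: d)) ->
  D != 0 -> Pr D -> exists P, monic_irr_factor D P /\ Pr P.
Proof.
move=> PrM Pr_size PrZ nzD PrD.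
have [P [iP PD PrP]] := exists_irr_factor PrM Pr_size nzD PrD.
have lcP : lead_coef P != 0 by rewrite lead_coef_eq0 irredp_neq0.
exists ((lead_coef P)^-1 *: P); split; last by apply: PrZ; rewrite ?invr_eq0.
split; first by apply/monicP; rewrite lead_coefZ mulVf.
  by apply: irredp_eqp iP; rewrite eqp_sym eqp_scale ?invr_eq0.
by rewrite dvdpZl ?invr_eq0.
Qed.

Lemma exists_monic_irr_factor_size D :
  (1 < size D)%N -> exists P, monic_irr_factor D P.
Proof.
move=> D_gt1; have nzD : D != 0 by rewrite -size_poly_gt0 ltnW.
have [|//||P [PD _]] := @exists_monic_irr_factor (fun d => 1 < size d)%N D _ _ _ nzD D_gt1.
- move=> d e de; have := leq_trans de (size_mul_leq d e).
  case: (ltnP 1 (size d)) => [|hd]; first by left.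
  case: (ltnP 1 (size e)) => [|he]; first by right.
  lia.
- by move=> c d c0; rewrite size_scale.
- by exists P.
Qed.

End IrreducibleFactors.

Lemma coprimep_pencil (K : fieldType) (f g : {poly K}) (b b' : K) :
  coprimep f g -> b != b' -> coprimep (f - b *: g) (f - b' *: g).
Proof.
move=> cfg bb'.
have -> : f - b' *: g = 1 * (f - b *: g) + (b - b') *: g.
  by rewrite mul1r scalerBl addrA subrK.
rewrite coprimep_addl_mul coprimepZr ?subr_eq0 // coprimep_sym.
by rewrite -scaleNr -mul_polyC addrC coprimep_addl_mul coprimep_sym.
Qed.

Section BaseChange.

Variables (K E : fieldType) (phi : {rmorphism K -> E}).
Implicit Types (D P : {poly K}) (h : {poly E}).

Lemma base_factor_unique h P1 P2 :
  irreducible_poly h -> P1 \is monic -> P2 \is monic ->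
  irreducible_poly P1 -> irreducible_poly P2 ->
  h %| map_poly phi P1 -> h %| map_poly phi P2 -> P1 = P2.
Proof.
move=> ih m1 m2 i1 i2 hP1; apply: contraTeq => P1P2.
apply: (irredp_coprime_dvd ih _ hP1).
rewrite coprimep_map irreducible_poly_coprime //.
by apply: contra P1P2 => /(monic_irredp_dvd_eq m1 m2 i1 i2) ->.
Qed.

Lemma exists_base_factor h D :
  irreducible_poly h -> D != 0 -> h %| map_poly phi D ->
  exists P, monic_irr_factor D P /\ h %| map_poly phi P.
Proof.
move=> ih nzD hD; apply: (exists_monic_irr_factor _ _ _ nzD hD).
- by move=> d e; rewrite rmorphM => /(irredp_dvdM ih)/orP.
- move=> d nzd hd; rewrite -(size_map_poly phi); case: ih => h_gt1 _.
  by rewrite (leq_trans h_gt1) // dvdp_leq ?map_poly_eq0.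
- by move=> c d c0; rewrite map_polyZ dvdpZr ?fmorph_eq0.
Qed.

End BaseChange.

Section Homogenization.

Variable K : fieldType.
Implicit Types p q f g : {poly K}.

(* Unlike [homogp], the degree is a parameter, so [homog n] is linear in [p]. *)
Definition homog (n : nat) p g f : {poly K} :=
  \sum_(i < n.+1) p`_i *: (f ^+ i * g ^+ (n - i)).

Lemma homogpE q g f : q != 0 -> homogp q g f = homog (size q).-1 q g f.
Proof. by rewrite -size_poly_gt0 /homogp /homog; case: (size q). Qed.

Lemma homogMX n p g f : homog n.+1 (p * 'X) g f = f * homog n p g f.
Proof.
rewrite /homog big_ord_recl coefMX eqxx scale0r add0r mulr_sumr.
by apply: eq_bigr => i _; rewrite coefMX subSS exprS -mulrA scalerAr.
Qed.

Lemma homogS n p g f :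
  (size p <= n.+1)%N -> homog n.+1 p g f = g * homog n p g f.
Proof.
move=> szp; rewrite /homog big_ord_recr /= nth_default // scale0r addr0.
rewrite mulr_sumr; apply: eq_bigr => i _.
by rewrite subSn 1?exprS 1?mulrCA 1?scalerAr // -ltnS.
Qed.

Lemma homogB n p q g f : homog n (p - q) g f = homog n p g f - homog n q g f.
Proof. by rewrite /homog -sumrB; apply: eq_bigr => i _; rewrite coefB scalerBl. Qed.

Lemma homogZ n c p g f : homog n (c *: p) g f = c *: homog n p g f.
Proof. by rewrite /homog scaler_sumr; apply: eq_bigr => i _; rewrite coefZ scalerA. Qed.

Lemma homog_prod_XsubC (rs : seq K) g f :
  homog (size rs) (\prod_(b <- rs) ('X - b%:P)) g f = \prod_(b <- rs) (f - b *: g).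
Proof.
elim: rs => [|b rs IH].
  by rewrite !big_nil /homog big_ord1 coefC scale1r mulr1.
rewrite !big_cons [('X - _) * _]mulrC mulrBr [_ * b%:P]mulrC mul_polyC homogB homogMX homogZ.
by rewrite homogS ?size_prod_XsubC // IH mulrBl scalerAl.
Qed.

Lemma homogp_prod_XsubC (rs : seq K) g f :
  homogp (\prod_(b <- rs) ('X - b%:P)) g f = \prod_(b <- rs) (f - b *: g).
Proof.
by rewrite homogpE ?monic_neq0 ?monic_prod_XsubC // size_prod_XsubC homog_prod_XsubC.
Qed.

Lemma map_homogp (E : fieldType) (phi : {rmorphism K -> E}) q g f :
  map_poly phi (homogp q g f) =
  homogp (map_poly phi q) (map_poly phi g) (map_poly phi f).
Proof.
rewrite /homogp rmorph_sum /= size_map_poly; apply: eq_bigr => i _.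
by rewrite map_polyZ rmorphM !rmorphXn coef_map.
Qed.

End Homogenization.

Section RelationCounting.

Variables (T1 T2 : eqType) (A : T1 -> Prop) (B : T2 -> Prop) (R : T1 -> T2 -> Prop).
Hypothesis R_total : forall a, A a -> exists2 b, B b & R a b.
Hypothesis R_functional :
  forall a b1 b2, A a -> B b1 -> B b2 -> R a b1 -> R a b2 -> b1 = b2.
Hypothesis R_surjective : forall b, B b -> exists2 a, A a & R a b.
Hypothesis R_injective :
  forall b a1 a2, B b -> A a1 -> A a2 -> R a1 b -> R a2 b -> a1 = a2.

Lemma enum_rel_image (s : seq T1) : uniq s -> (forall a, a \in s -> A a) ->
  exists t, [/\ uniq t, size t = size s &
    forall b, b \in t <-> B b /\ exists2 a, a \in s & R a b].
Proof.
elim: s => [|a s IH] /=.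
  by move=> _ _; exists [::]; split=> // b; split=> // [[_ []]].
case/andP=> a_s s_uniq sA.
have [|t [t_uniq szt tE]] := IH s_uniq; first by move=> x xs; apply: sA; rewrite inE xs orbT.
have Aa : A a by apply: sA; rewrite mem_head.
have [b Bb Rab] := R_total Aa.
have b_t : b \notin t.
  apply/negP => /tE[_ [a' a's Ra'b]].
  have a'a := R_injective Bb Aa (sA a' _) Rab Ra'b.
  by move: a_s; rewrite a'a ?a's // inE a's orbT.
exists (b :: t); split; rewrite /= ?b_t ?szt //.
move=> y; rewrite inE; split.
  case/orP => [/eqP -> | /tE[By [a' a's Ra'y]]].
    by split=> //; exists a; rewrite ?mem_head.
  by split=> //; exists a'; rewrite // inE a's orbT.
case=> By [a' + Ra'y]; rewrite inE => /orP[/eqP a'a | a's].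
  by rewrite a'a in Ra'y; rewrite (R_functional Aa By Bb Ra'y Rab) eqxx.
by apply/orP; right; apply/tE; split=> //; exists a'.
Qed.

Lemma enum_rel_bij (sA : seq T1) : uniq sA -> (forall a, a \in sA <-> A a) ->
  exists sB, [/\ uniq sB, (forall b, b \in sB <-> B b) & size sB = size sA].
Proof.
move=> sA_uniq sAE.
have [|t [t_uniq szt tE]] := enum_rel_image sA_uniq; first by move=> a /sAE.
exists t; split=> // b; split=> [/tE[] //|Bb]; apply/tE; split=> //.
by have [a Aa Rab] := R_surjective Bb; exists a; rewrite ?sAE.
Qed.

End RelationCounting.

Lemma enum_bounded_poly_pred (F : finFieldType) (n : nat) (P : {poly F} -> Prop) :
  (forall p, P p -> (size p <= n)%N) -> exists s, uniq s /\ forall p, p \in s <-> P p.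
Proof.
move=> Pn; pose inP p := if excluded_middle_informative (P p) then true else false.
exists [seq p <- undup [seq rVpoly v | v : 'rV[F]_n] | inP p].
split=> [|p]; first by rewrite filter_uniq ?undup_uniq.
rewrite mem_filter mem_undup /inP; case: excluded_middle_informative => Pp; last by split.
split=> // _; apply/imageP; exists (poly_rV p); rewrite ?poly_rV_K ?Pn // mem_enum.
Qed.
Section FiniteGalois.

Variables (F : finFieldType) (L : splittingFieldType F).
Implicit Types (tau sigma : gal_of {:L}) (p : {poly F}) (P N : {poly L}).

Lemma gal_of_Gal1 tau : tau \in 'Gal({:L} / 1%VS)%g.
Proof. by rewrite gal_kHom ?sub1v // k1AHom. Qed.

Lemma map_poly_gal_alg tau p :
  map_poly tau (map_poly (in_alg L) p) = map_poly (in_alg L) p.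
Proof. by rewrite -map_poly_comp; apply: eq_map_poly => c /=; rewrite rmorph_alg. Qed.

Lemma map_poly_galM tau sigma P :
  map_poly sigma (map_poly tau P) = map_poly (tau * sigma)%g P.
Proof. by rewrite -map_poly_comp; apply: eq_map_poly => c /=; rewrite galM ?memvf. Qed.

Lemma map_poly_gal1 P : map_poly (1%g : gal_of {:L}) P = P.
Proof. by apply/polyP => i; rewrite coef_map /= gal_id. Qed.

Lemma gal_invariant_poly N :
  (forall tau, map_poly tau N = N) -> exists N0 : {poly F}, N = map_poly (in_alg L) N0.
Proof.
move=> N_inv; apply/polyOver1P/polyOverP => i.
have /galois_fixedField <- := @finField_galois F L 1%AS {:L} (sub1v _).
apply/fixedFieldP; first exact: memvf.
by move=> tau _; rewrite -{2}(N_inv tau) coef_map.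
Qed.

Variables (q : {poly F}) (alpha : L).
Hypotheses (q_monic : q \is monic) (q_irr : irreducible_poly q).
Hypothesis L_split : splittingFieldFor 1%VS (map_poly (in_alg L) q) fullv.
Hypothesis q_alpha : root (map_poly (in_alg L) q) alpha.

Lemma minPoly1_root : minPoly 1 alpha = map_poly (in_alg L) q.
Proof.
have /polyOver1P [p0 Dp] := minPolyOver 1 alpha.
have : minPoly 1 alpha %| map_poly (in_alg L) q by apply: minPoly_dvdp; rewrite ?alg_polyOver.
rewrite Dp dvdp_map => /(irredp_XsubCP q_irr)[p0_1|p0_q].
  have := root_size_gt1 (monic_neq0 (monic_minPoly 1 alpha)) (root_minPoly 1 alpha).
  by rewrite Dp size_map_poly (eqp_size p0_1) size_poly1.
have p0_monic : p0 \is monic by rewrite -(map_monic (in_alg L)) -Dp monic_minPoly.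
by apply/eqP; rewrite -eqp_monic ?map_monic // eqp_map.
Qed.

Lemma gal_conj_root b :
  root (map_poly (in_alg L) q) b -> exists tau : gal_of {:L}, tau alpha = b.
Proof.
rewrite -minPoly1_root => qb.
have [tau _ tau_alpha] := normalField_root_minPoly (sub1v _) (normalFieldf 1) (memvf alpha) qb.
by exists tau.
Qed.

(* Over a finite field every extension is normal, so [F(alpha)] contains all
   the roots of [q] and is the whole splitting field. *)
Lemma adjoin_root_full : <<1; alpha>>%VS = fullv.
Proof.
apply/eqP; rewrite eqEsubv subvf /=; case: L_split => rs q_rs <-.
apply/Fadjoin_seqP; split=> [|b rs_b]; first exact: sub1v.
have /and3P[_ _ /normalFieldP alpha_normal] := @finField_galois F L 1%AS <<1; alpha>>%AS (sub1v _).
have [r r_alpha mp_alpha] := alpha_normal alpha (memv_adjoin 1 alpha).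
have : root (minPoly 1 alpha) b by rewrite minPoly1_root (eqp_root q_rs) root_prod_XsubC.
by rewrite mp_alpha root_prod_XsubC => /(allP r_alpha).
Qed.

Lemma gal_fix_root tau : tau alpha = alpha -> tau = 1%g.
Proof.
move=> tau_alpha; apply/eqP/gal_eqP => x _; rewrite gal_id.
have : x \in <<1; alpha>>%VS by rewrite adjoin_root_full memvf.
case/Fadjoin_polyP => p p1 ->.
by rewrite -horner_map /= tau_alpha (fixedPoly_gal (sub1v _) (gal_of_Gal1 tau) p1).
Qed.

End FiniteGalois.

Section PencilCorrespondence.

Variables (F : finFieldType) (L : splittingFieldType F).
Variables (f g q : {poly F}) (alpha : L).
Hypothesis fg_coprime : coprimep f g.
Hypotheses (q_monic : q \is monic) (q_irr : irreducible_poly q).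
Hypothesis L_split : splittingFieldFor 1%VS (map_poly (in_alg L) q) fullv.
Hypothesis q_alpha : root (map_poly (in_alg L) q) alpha.

Local Notation toL := (map_poly (in_alg L)).
Local Notation Q := (homogp q g f).
Local Notation pencil b := (toL f - b *: toL g).

Lemma map_gal_pencil (tau : gal_of {:L}) b : map_poly tau (pencil b) = pencil (tau b).
Proof.
by rewrite rmorphB /= -!mul_polyC rmorphM /= map_polyC !map_poly_gal_alg.
Qed.

Lemma pencil_irr_dvd_eq h b b' : irreducible_poly h ->
  h %| pencil b -> h %| pencil b' -> b = b'.
Proof.
move=> ih hb; apply: contraTeq => bb'; apply: (irredp_coprime_dvd ih _ hb).
by rewrite coprimep_pencil ?coprimep_map.
Qed.

Lemma map_homogp_pencil : exists2 rs : seq L,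
  (forall b, root (toL q) b = (b \in rs)) & toL Q = \prod_(b <- rs) pencil b.
Proof.
case: L_split => rs q_rs _; exists rs => [b|]; first by rewrite (eqp_root q_rs) root_prod_XsubC.
rewrite map_homogp; have -> : toL q = \prod_(b <- rs) ('X - b%:P).
  by apply/eqP; rewrite -eqp_monic ?map_monic ?monic_prod_XsubC.
exact: homogp_prod_XsubC.
Qed.

Lemma pencil_dvd_mapQ : pencil alpha %| toL Q.
Proof.
have [rs rsE ->] := map_homogp_pencil.
by rewrite (big_rem alpha) ?dvdp_mulr // -rsE.
Qed.

Lemma irredp_dvd_mapQ h : irreducible_poly h -> h %| toL Q ->
  exists2 b, root (toL q) b & h %| pencil b.
Proof.
have [rs rsE ->] := map_homogp_pencil => ih /(irredp_dvd_prod ih)[b rs_b hb].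
by exists b; rewrite ?rsE.
Qed.

Lemma exists_pencil_factor P : monic_irr_factor Q P ->
  exists2 h, monic_irr_factor (pencil alpha) h & h %| toL P.
Proof.
case=> _ iP PQ.
have [|h0 [_ i0 h0P]] := exists_monic_irr_factor_size (D := toL P).
  by rewrite size_map_poly; case: iP.
have h0Q : h0 %| toL Q by rewrite (dvdp_trans h0P) ?dvdp_map.
have [b qb h0b] := irredp_dvd_mapQ i0 h0Q.
have [tau tau_alpha] := gal_conj_root q_monic q_irr q_alpha qb.
have sigma_b : (tau^-1)%g b = alpha by rewrite -tau_alpha -galM ?memvf // mulgV gal_id.
have [|h [mh ih h_h0]] := exists_monic_irr_factor_size (D := map_poly (tau^-1)%g h0).
  by rewrite size_map_poly; case: i0.
exists h; first split=> //; apply: (dvdp_trans h_h0).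
  by rewrite -sigma_b -map_gal_pencil dvdp_map.
by rewrite -(map_poly_gal_alg (tau^-1)%g P) dvdp_map.
Qed.

(* The product of the Galois conjugates of [h1] is defined over [F], hence
   divisible by [P]; so [h2] divides a conjugate [tau h1], which lies in the
   pencil member of [tau alpha].  Disjointness of the pencil forces
   [tau alpha = alpha], i.e. [tau = 1]. *)
Lemma pencil_factor_unique P h1 h2 : monic_irr_factor Q P ->
  monic_irr_factor (pencil alpha) h1 -> monic_irr_factor (pencil alpha) h2 ->
  h1 %| toL P -> h2 %| toL P -> h1 = h2.
Proof.
case=> mP iP _ [m1 i1 h1W] [m2 i2 h2W] h1P h2P.
pose N := \prod_(tau : gal_of {:L}) map_poly tau h1.
have [N0 DN] : exists N0 : {poly F}, N = toL N0.
  apply: gal_invariant_poly => sigma; rewrite rmorph_prod /=.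
  rewrite [RHS](reindex_inj (mulIg sigma)) /=.
  by apply: eq_bigr => tau _; rewrite map_poly_galM.
have h1N : h1 %| N by rewrite /N (bigD1 (1%g : gal_of {:L})) //= map_poly_gal1 dvdp_mulr.
have P_N0 : P %| N0.
  apply: contraLR h1N => nPN0; rewrite DN; apply: (irredp_coprime_dvd i1 _ h1P).
  by rewrite coprimep_map irreducible_poly_coprime.
have [tau _ h2_tau] : exists2 tau, tau \in index_enum (gal_of {:L}) & h2 %| map_poly tau h1.
  by apply: (irredp_dvd_prod i2); rewrite -/N DN (dvdp_trans h2P) ?dvdp_map.
have tau_alpha : tau alpha = alpha.
  apply/esym/(pencil_irr_dvd_eq i2 h2W).
  by rewrite (dvdp_trans h2_tau) // -map_gal_pencil dvdp_map.
move: h2_tau; rewrite (gal_fix_root q_monic q_irr L_split q_alpha tau_alpha) map_poly_gal1.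
by move/(monic_irredp_dvd_eq m2 m1 i2 i1).
Qed.

Lemma num_monic_irr_factors_pencil : Q != 0 ->
  exists n, num_monic_irr_factors Q n /\ num_monic_irr_factors (pencil alpha) n.
Proof.
move=> nzQ.
have [sA [sA_uniq sAE]] := @enum_bounded_poly_pred F (size Q) (monic_irr_factor Q)
  (fun P '(And3 _ _ PQ) => dvdp_leq nzQ PQ).
have [||||sB [sB_uniq sBE szB]] :=
  @enum_rel_bij _ _ (monic_irr_factor Q) (monic_irr_factor (pencil alpha))
    (fun P h => h %| toL P) _ _ _ _ sA sA_uniq sAE.
- exact: exists_pencil_factor.
- by move=> P h1 h2 AP Bh1 Bh2; apply: pencil_factor_unique.
- move=> h [_ ih hW].
  have hQ : h %| toL Q by apply: dvdp_trans hW _; exact: pencil_dvd_mapQ.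
  by have [P [AP hP]] := exists_base_factor ih nzQ hQ; exists P.
- by move=> h P1 P2 [_ ih _] [m1 i1 _] [m2 i2 _]; apply: base_factor_unique.
by exists (size sA); split; [exists sA | exists sB].
Qed.

End PencilCorrespondence.

Unset Implicit Arguments.

Theorem mainTheorem3 (F : finFieldType) (f g q : {poly F})
  (L : fieldExtType F) (alpha : L) :
  coprimep f g ->
  q \is monic -> irreducible_poly q ->
  homogp q g f != 0 ->
  splittingFieldFor 1%VS (map_poly (in_alg L) q) fullv ->
  root (map_poly (in_alg L) q) alpha ->
  exists n : nat,
    num_monic_irr_factors (homogp q g f) n /\
    num_monic_irr_factors (map_poly (in_alg L) f - alpha *: map_poly (in_alg L) g) n.
Proof.
move=> fg_coprime q_monic q_irr nzQ L_split q_alpha.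
exact: (@num_monic_irr_factors_pencil F (FinSplittingFieldType F L) f g q alpha
  fg_coprime q_monic q_irr L_split q_alpha nzQ).
Qed.
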